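(* Let $X$ be a real Hilbert space and let $\eta,\eta'\in(0,1)$ with $\eta<\eta'$. If $\delta\in(0,1)$ satisfies $\frac{\delta+\eta}{1-\delta}\le\eta'$ and $x,y\in X$ are linearly independent vectors such that $\cos(x,y)\le\eta$ and $\cos(y-x,-x)\le\delta$, then $\|x\|\le\eta'\|y\|$.
   Context: For nonzero $u,w\in X$, $\cos(u,w)=\frac{\langle u,w\rangle}{\|u\|\|w\|}$. *)

From HB Require Import structures.
From mathcomp Require Import all_boot all_order all_algebra.
From mathcomp Require Import reals.
Set Implicit Arguments. Unset Strict Implicit. Unset Printing Implicit Defensive.
Import Order.TTheory GRing.Theory Num.Theory.
Local Open Scope ring_scope.

Definition ip_norm (R : realType) (X : lmodType R) (ip : X -> X -> R) (x : X) : R :=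
  Num.sqrt (ip x x).

Definition is_inner_product (R : realType) (X : lmodType R) (ip : X -> X -> R) : Prop :=
  [/\ (forall x y, ip x y = ip y x),
      (forall a x y z, ip (a *: x + y) z = a * ip x z + ip y z),
      (forall x, 0 <= ip x x) &
      (forall x, ip x x = 0 -> x = 0)].

Definition ip_complete (R : realType) (X : lmodType R) (ip : X -> X -> R) : Prop :=
  forall u : nat -> X,
    (forall e : R, 0 < e -> exists N : nat, forall m n : nat,
        (N <= m)%N -> (N <= n)%N -> ip_norm ip (u m - u n) < e) ->
    exists l : X, forall e : R, 0 < e -> exists N : nat, forall n : nat,
        (N <= n)%N -> ip_norm ip (u n - l) < e.

Definition is_real_hilbert (R : realType) (X : lmodType R) (ip : X -> X -> R) : Prop :=
  is_inner_product ip /\ ip_complete ip.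

(* cos(u,w) = <u,w> / (||u|| ||w||), used for nonzero u, w. *)
Definition ip_cos (R : realType) (X : lmodType R) (ip : X -> X -> R) (u w : X) : R :=
  ip u w / (ip_norm ip u * ip_norm ip w).

Definition lin_indep2 (R : realType) (X : lmodType R) (x y : X) : Prop :=
  forall a b : R, a *: x + b *: y = 0 -> a = 0 /\ b = 0.

From HB Require Import structures.
From mathcomp Require Import all_boot all_order all_algebra.
From mathcomp Require Import reals.
From mathcomp Require Import ring lra.
Set Implicit Arguments. Unset Strict Implicit.
Import Order.TTheory GRing.Theory Num.Theory.
Local Open Scope ring_scope.

(* Write a = |x|, b = |y|, p = <x, y>.  The first hypothesis gives p <= eta a b.
   The second gives a^2 - p = <y - x, -x> <= delta a |y - x|, and the triangle
   inequality |y - x| <= a + b turns it into a^2 - p <= delta a (a + b).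
   Adding up and dividing by a yields (1 - delta) a <= (delta + eta) b. *)

Section InnerProduct.
Variables (R : realType) (X : lmodType R) (ip : X -> X -> R).
Hypothesis ip_inner : is_inner_product ip.

Lemma ipC x y : ip x y = ip y x.
Proof. by case: ip_inner. Qed.

Lemma ip_ge0 x : 0 <= ip x x.
Proof. by case: ip_inner. Qed.

Lemma ip_gt0 x : x != 0 -> 0 < ip x x.
Proof.
case: ip_inner => _ _ _ ip_eq0 x_neq0; rewrite lt_def ip_ge0 andbT.
by apply: contraNneq x_neq0 => /ip_eq0 ->.
Qed.

Lemma ip0l z : ip 0 z = 0.
Proof.
case: ip_inner => _ ip_lin _ _.
by have := ip_lin 1 0 0 z; rewrite scale1r addr0 mul1r; lra.
Qed.

Lemma ipDl x y z : ip (x + y) z = ip x z + ip y z.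
Proof. by case: ip_inner => _ ip_lin _ _; rewrite -[x]scale1r ip_lin mul1r scale1r. Qed.

Lemma ipZl a x z : ip (a *: x) z = a * ip x z.
Proof. by case: ip_inner => _ ip_lin _ _; rewrite -[a *: x]addr0 ip_lin ip0l addr0. Qed.

Lemma ipNl x z : ip (- x) z = - ip x z.
Proof. by rewrite -scaleN1r ipZl mulN1r. Qed.

Lemma ipBl x y z : ip (x - y) z = ip x z - ip y z.
Proof. by rewrite ipDl ipNl. Qed.

Lemma ip0r z : ip z 0 = 0.
Proof. by rewrite ipC ip0l. Qed.

Lemma ipDr x y z : ip z (x + y) = ip z x + ip z y.
Proof. by rewrite !(ipC z) ipDl. Qed.

Lemma ipZr a x z : ip z (a *: x) = a * ip z x.
Proof. by rewrite !(ipC z) ipZl. Qed.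

Lemma ipNr x z : ip z (- x) = - ip z x.
Proof. by rewrite !(ipC z) ipNl. Qed.

Lemma ipBr x y z : ip z (x - y) = ip z x - ip z y.
Proof. by rewrite ipDr ipNr. Qed.

Lemma ip_norm_ge0 x : 0 <= ip_norm ip x.
Proof. exact: sqrtr_ge0. Qed.

Lemma ip_norm_gt0 x : x != 0 -> 0 < ip_norm ip x.
Proof. by move=> /ip_gt0; rewrite -sqrtr_gt0. Qed.

Lemma sqr_ip_norm x : ip_norm ip x ^+ 2 = ip x x.
Proof. exact/sqr_sqrtr/ip_ge0. Qed.

Lemma ip_normN x : ip_norm ip (- x) = ip_norm ip x.
Proof. by rewrite /ip_norm ipNl ipNr opprK. Qed.

Lemma ip_cauchy_schwarz x y : ip x y ^+ 2 <= ip x x * ip y y.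
Proof.
have [->|y_neq0] := eqVneq y 0; first by rewrite !ip0r mulr0 expr0n.
have /ip_gt0 yy_gt0 := y_neq0.
have := ip_ge0 (ip y y *: x - ip x y *: y).
rewrite !ipBl !ipBr !ipZl !ipZr (ipC y x).
have -> : ip y y * (ip y y * ip x x) - ip y y * (ip x y * ip x y)
          - (ip x y * (ip y y * ip x y) - ip x y * (ip x y * ip y y))
        = ip y y * (ip x x * ip y y - ip x y ^+ 2) by ring.
by rewrite pmulr_rge0 // subr_ge0.
Qed.

Lemma ip_le_norm x y : ip x y <= ip_norm ip x * ip_norm ip y.
Proof.
rewrite /ip_norm -sqrtrM ?ip_ge0 // (le_trans (ler_norm _)) //.
by rewrite -sqrtr_sqr ler_wsqrtr // ip_cauchy_schwarz.
Qed.

Lemma ip_normD x y : ip_norm ip (x + y) <= ip_norm ip x + ip_norm ip y.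
Proof.
rewrite -(ger0_norm (addr_ge0 (ip_norm_ge0 x) (ip_norm_ge0 y))) -sqrtr_sqr.
rewrite ler_wsqrtr // ipDl !ipDr (ipC y x) sqrrD -!sqr_ip_norm.
by have := ip_le_norm x y; lra.
Qed.

Lemma ip_normB x y : ip_norm ip (x - y) <= ip_norm ip x + ip_norm ip y.
Proof. by rewrite -(ip_normN y) ip_normD. Qed.

Lemma ip_le_cos u w d : u != 0 -> w != 0 ->
  ip_cos ip u w <= d -> ip u w <= d * ip_norm ip u * ip_norm ip w.
Proof.
move=> /ip_norm_gt0 u_gt0 /ip_norm_gt0 w_gt0.
by rewrite /ip_cos ler_pdivrMr ?mulr_gt0 // mulrA.
Qed.

Lemma ip_norm_cos_bound x y eta delta : x != 0 -> y != 0 -> x != y ->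
  ip_cos ip x y <= eta -> ip_cos ip (y - x) (- x) <= delta -> 0 <= delta ->
  ip_norm ip x * (1 - delta) <= (delta + eta) * ip_norm ip y.
Proof.
move=> x_neq0 y_neq0 x_neq_y cos_xy cos_yx delta_ge0.
have yx_neq0 : y - x != 0 by rewrite subr_eq0 eq_sym.
have nx_neq0 : - x != 0 by rewrite oppr_eq0.
have x_gt0 := ip_norm_gt0 x_neq0.
have xy_le := ip_le_cos x_neq0 y_neq0 cos_xy.
have := ip_le_cos yx_neq0 nx_neq0 cos_yx.
rewrite ipNr ipBl (ipC y x) ip_normN -sqr_ip_norm => yx_le.
have triangle : delta * ip_norm ip x * ip_norm ip (y - x)
    <= delta * ip_norm ip x * (ip_norm ip y + ip_norm ip x).
  by rewrite ler_wpM2l ?mulr_ge0 ?ip_normB ?ip_norm_ge0.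
by rewrite -(ler_pM2l x_gt0); lra.
Qed.

End InnerProduct.

Lemma lin_indep2_neq0 (R : realType) (X : lmodType R) (x y : X) :
  lin_indep2 x y -> [/\ x != 0, y != 0 & x != y].
Proof.
move=> indep; split; apply/eqP => eq_xy.
- have := indep 1 0; rewrite eq_xy scaler0 scale0r addr0 => /(_ erefl) [/eqP].
  by rewrite oner_eq0.
- have := indep 0 1; rewrite eq_xy scaler0 scale0r addr0 => /(_ erefl) [_ /eqP].
  by rewrite oner_eq0.
- have := indep 1 (-1); rewrite eq_xy scale1r scaleN1r subrr => /(_ erefl) [/eqP].
  by rewrite oner_eq0.
Qed.

Theorem fact4p7 (R : realType) (X : lmodType R) (ip : X -> X -> R)
  (hX : is_real_hilbert ip) (eta eta' delta : R) (x y : X) :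
  0 < eta < 1 -> 0 < eta' < 1 -> eta < eta' ->
  0 < delta < 1 -> (delta + eta) / (1 - delta) <= eta' ->
  lin_indep2 x y ->
  ip_cos ip x y <= eta ->
  ip_cos ip (y - x) (- x) <= delta ->
  ip_norm ip x <= eta' * ip_norm ip y.
Proof.
case: hX => ip_inner _ _ _ _ /andP[delta_gt0 delta_lt1] ratio_le indep cos_xy cos_yx.
have [x_neq0 y_neq0 x_neq_y] := lin_indep2_neq0 indep.
have := ip_norm_cos_bound ip_inner x_neq0 y_neq0 x_neq_y cos_xy cos_yx (ltW delta_gt0).
rewrite -ler_pdivlMr ?subr_gt0 // mulrAC => /le_trans; apply.
by rewrite ler_wpM2r ?ip_norm_ge0.
Qed.
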